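(* (i) There exists a zero-dimensional locally compact metrizable abelian group in which every element $x$ satisfies $2x=0$ and which is not $g$-reversible. (ii) There exists a locally connected locally compact metrizable abelian group which is not $g$-reversible.
   Context: All topological groups are assumed Hausdorff. A topological group $G$ is called $g$-reversible if every continuous automorphism of $G$ (i.e. every continuous group isomorphism of $G$ onto itself) is an open map. *)

From Stdlib Require Import Reals List Classical.
Open Scope R_scope.

Record TopAbGroup := {
  carrier :> Type;
  add : carrier -> carrier -> carrier;
  zero : carrier;
  opp : carrier -> carrier;
  addA : forall x y z, add x (add y z) = add (add x y) z;
  addC : forall x y, add x y = add y x;
  add0 : forall x, add zero x = x;
  addN : forall x, add (opp x) x = zero;
  is_open : (carrier -> Prop) -> Prop;
  open_full : is_open (fun _ => True);
  open_inter : forall U V, is_open U -> is_open V -> is_open (fun x => U x /\ V x);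
  open_union : forall F : (carrier -> Prop) -> Prop,
      (forall U, F U -> is_open U) -> is_open (fun x => exists U, F U /\ U x);
  add_cont : forall W x y, is_open W -> W (add x y) ->
      exists U V, is_open U /\ is_open V /\ U x /\ V y /\
        (forall a b, U a -> V b -> W (add a b));
  opp_cont : forall W, is_open W -> is_open (fun x => W (opp x));
  hausdorff : forall x y, x <> y ->
      exists U V, is_open U /\ is_open V /\ U x /\ V y /\
        (forall z, U z -> V z -> False)
}.

Arguments add {_}. Arguments zero {_}. Arguments opp {_}. Arguments is_open {_}.

Section Top.
Variable G : TopAbGroup.

Definition is_closed (A : G -> Prop) : Prop := is_open (fun x => ~ A x).

Definition compact (K : G -> Prop) : Prop :=
  forall F : (G -> Prop) -> Prop,
    (forall U, F U -> is_open U) ->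
    (forall x, K x -> exists U, F U /\ U x) ->
    exists l : list (G -> Prop),
      (forall U, In U l -> F U) /\ (forall x, K x -> exists U, In U l /\ U x).

Definition locally_compact : Prop :=
  forall x : G, exists U K, is_open U /\ U x /\ compact K /\ (forall y, U y -> K y).

Definition metrizable : Prop :=
  exists d : G -> G -> R,
    (forall x y, 0 <= d x y) /\
    (forall x y, d x y = 0 <-> x = y) /\
    (forall x y, d x y = d y x) /\
    (forall x y z, d x z <= d x y + d y z) /\
    (forall U : G -> Prop, is_open U <->
       (forall x, U x -> exists eps, 0 < eps /\ forall y, d x y < eps -> U y)).

Definition zero_dimensional : Prop :=
  forall (U : G -> Prop) (x : G), is_open U -> U x ->
    exists V, is_open V /\ is_closed V /\ V x /\ (forall y, V y -> U y).

Definition connected (C : G -> Prop) : Prop :=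
  ~ exists A B : G -> Prop, is_open A /\ is_open B /\
      (forall x, C x -> A x \/ B x) /\
      (exists x, C x /\ A x) /\ (exists x, C x /\ B x) /\
      (forall x, C x -> A x -> B x -> False).

Definition locally_connected : Prop :=
  forall (U : G -> Prop) (x : G), is_open U -> U x ->
    exists V, is_open V /\ connected V /\ V x /\ (forall y, V y -> U y).

Definition continuous (f : G -> G) : Prop :=
  forall U, is_open U -> is_open (fun x => U (f x)).

Definition open_map (f : G -> G) : Prop :=
  forall U, is_open U -> is_open (fun y => exists x, U x /\ f x = y).

Definition cont_automorphism (f : G -> G) : Prop :=
  (forall x y, f (add x y) = add (f x) (f y)) /\
  (forall x y, f x = f y -> x = y) /\
  (forall y, exists x, f x = y) /\
  continuous f.

Definition g_reversible : Prop :=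
  forall f : G -> G, cont_automorphism f -> open_map f.

End Top.

From Pilot Require Import Defs.
From Stdlib Require Import Reals List Classical Lra Lia ClassicalEpsilon
  FunctionalExtensionality ProofIrrelevance Bool.
Open Scope R_scope.

(** Let K be a compact metric abelian group with a nonzero element, and let
    G = K^N x K^N, the first factor discrete and the second with the product
    topology. G is metrizable and locally compact ({0} x K^N is a compact open
    subgroup), and it is zero-dimensional or locally connected when K^N is, as
    for K = Z/2 and K = R/Z. The map (u, t) |-> (u(2n), u(2n+1) interleaved
    with t) is a group automorphism, continuous since it only moves coordinates
    from the discrete factor to the compact one, but its inverse is not: the
    open subgroup {0} x K^N is mapped onto {0} x {t | t(2n) = 0 for all n},
    which is not open. *)

Lemma half_pow_pos n : 0 < (/2)^n.
Proof. apply pow_lt; lra. Qed.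

Lemma half_pow_le1 n : (/2)^n <= 1.
Proof. rewrite <- (pow1 n). apply pow_incr; lra. Qed.

Lemma half_pow_le n m : (n <= m)%nat -> (/2)^m <= (/2)^n.
Proof.
  induction 1 as [|m _ IH]; [lra|].
  simpl. pose proof (half_pow_pos m); lra.
Qed.

Lemma half_pow_lt eps : 0 < eps -> exists n, (/2)^n < eps.
Proof.
  intros Heps. destruct (pow_lt_1_zero (/2)) with (y := eps) as [N HN];
    [rewrite Rabs_pos_eq; lra | exact Heps |].
  exists N. specialize (HN N (le_n N)).
  rewrite Rabs_pos_eq in HN; [exact HN | left; apply half_pow_pos].
Qed.

(** * Metric groups and their topology *)

(* The bound on the metric keeps the weighted supremum over sequences finite. *)
Record MetricGroup := {
  mcar :> Type;
  madd : mcar -> mcar -> mcar;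
  mzero : mcar;
  mopp : mcar -> mcar;
  maddA : forall x y z, madd x (madd y z) = madd (madd x y) z;
  maddC : forall x y, madd x y = madd y x;
  madd0 : forall x, madd mzero x = x;
  maddN : forall x, madd (mopp x) x = mzero;
  mdist : mcar -> mcar -> R;
  mdist_ge0 : forall x y, 0 <= mdist x y;
  mdist_le1 : forall x y, mdist x y <= 1;
  mdist_eq0 : forall x y, mdist x y = 0 <-> x = y;
  mdist_sym : forall x y, mdist x y = mdist y x;
  mdist_tri : forall x y z, mdist x z <= mdist x y + mdist y z;
  mdist_addr : forall x y a, mdist (madd x a) (madd y a) = mdist x y
}.

Arguments madd {_}. Arguments mzero {_}. Arguments mopp {_}. Arguments mdist {_}.
Arguments maddA {_}. Arguments maddC {_}. Arguments madd0 {_}. Arguments maddN {_}.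
Arguments mdist_ge0 {_}. Arguments mdist_le1 {_}. Arguments mdist_eq0 {_}.
Arguments mdist_sym {_}. Arguments mdist_tri {_}. Arguments mdist_addr {_}.

Definition ultrametric (M : MetricGroup) : Prop :=
  forall x y z : M, mdist x z <= Rmax (mdist x y) (mdist y z).

Definition set_bit (p : nat -> bool) (k : nat) (b : bool) : nat -> bool :=
  fun i => if Nat.eq_dec i k then b else p i.

Section MetricTopology.
Variable M : MetricGroup.
Implicit Types (x y z a : M) (U V : M -> Prop).

Lemma mdist_self x : mdist x x = 0.
Proof. apply mdist_eq0; reflexivity. Qed.

Lemma maddK x a : madd (madd x a) (mopp a) = x.
Proof. rewrite <- maddA, (maddC a), maddN, maddC, madd0; reflexivity. Qed.

Lemma maddNK x a : madd (madd x (mopp a)) a = x.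
Proof. rewrite <- maddA, maddN, maddC, madd0; reflexivity. Qed.

Lemma madd_injr a : forall x y, madd x a = madd y a -> x = y.
Proof. intros x y E. rewrite <- (maddK x a), <- (maddK y a), E; reflexivity. Qed.

Lemma mdist_opp x y : mdist (mopp x) (mopp y) = mdist x y.
Proof.
  rewrite <- (mdist_addr _ _ (madd x y)).
  rewrite maddA, maddN, madd0, (maddC x y), maddA, maddN, madd0. apply mdist_sym.
Qed.

Definition mopen U : Prop :=
  forall x, U x -> exists eps, 0 < eps /\ forall y, mdist x y < eps -> U y.

Lemma mopen_ball x r : mopen (fun y => mdist x y < r).
Proof.
  intros y Hy. exists (r - mdist x y). split; [lra|].
  intros z Hz. pose proof (mdist_tri x y z); lra.
Qed.

Lemma mopen_full : mopen (fun _ => True).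
Proof. intros x _. exists 1. split; [lra | auto]. Qed.

Lemma mopen_inter U V : mopen U -> mopen V -> mopen (fun x => U x /\ V x).
Proof.
  intros HU HV x [Ux Vx].
  destruct (HU x Ux) as [e1 [He1 H1]], (HV x Vx) as [e2 [He2 H2]].
  exists (Rmin e1 e2). split; [apply Rmin_glb_lt; assumption|].
  intros y Hy. pose proof (Rmin_l e1 e2); pose proof (Rmin_r e1 e2).
  split; [apply H1 | apply H2]; lra.
Qed.

Lemma mopen_union (F : (M -> Prop) -> Prop) :
  (forall U, F U -> mopen U) -> mopen (fun x => exists U, F U /\ U x).
Proof.
  intros HF x [U [FU Ux]]. destruct (HF U FU x Ux) as [e [He H]].
  exists e. split; [exact He|]. intros y Hy. exists U; auto.
Qed.

Lemma mopen_ext U V : (forall x, U x <-> V x) -> mopen U -> mopen V.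
Proof.
  intros E HU x Vx. destruct (HU x (proj2 (E x) Vx)) as [e [He H]].
  exists e. split; [exact He|]. intros y Hy. apply E, H, Hy.
Qed.

Lemma mopen_translate U a : mopen U -> mopen (fun x => U (madd x a)).
Proof.
  intros HU x Ux. destruct (HU _ Ux) as [e [He H]].
  exists e. split; [exact He|]. intros y Hy. apply H. rewrite mdist_addr; exact Hy.
Qed.

Lemma madd_cont W x y : mopen W -> W (madd x y) ->
  exists U V, mopen U /\ mopen V /\ U x /\ V y /\
    (forall a b, U a -> V b -> W (madd a b)).
Proof.
  intros HW Wxy. destruct (HW _ Wxy) as [e [He H]].
  exists (fun a => mdist x a < e/2), (fun b => mdist y b < e/2).
  repeat split; try apply mopen_ball; try (rewrite mdist_self; lra).
  intros a b Ha Hb. apply H.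
  pose proof (mdist_tri (madd x y) (madd a y) (madd a b)) as T.
  assert (E : mdist (madd a y) (madd a b) = mdist y b)
    by (rewrite (maddC a y), (maddC a b); apply mdist_addr).
  rewrite mdist_addr, E in T. lra.
Qed.

Lemma mopp_cont W : mopen W -> mopen (fun x => W (mopp x)).
Proof.
  intros HW x Wx. destruct (HW _ Wx) as [e [He H]].
  exists e. split; [exact He|]. intros y Hy. apply H. rewrite mdist_opp; exact Hy.
Qed.

Lemma mhausdorff x y : x <> y ->
  exists U V, mopen U /\ mopen V /\ U x /\ V y /\ (forall z, U z -> V z -> False).
Proof.
  intros Hxy. set (r := mdist x y).
  assert (Hr : 0 < r).
  { destruct (mdist_ge0 x y) as [|E]; [assumption|].
    exfalso. apply Hxy, mdist_eq0. symmetry; exact E. }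
  exists (fun z => mdist x z < r/2), (fun z => mdist y z < r/2).
  repeat split; try apply mopen_ball; try (rewrite mdist_self; lra).
  intros z Hx Hy. pose proof (mdist_tri x z y). rewrite (mdist_sym z y) in *.
  unfold r in *. lra.
Qed.

Definition metric_top : TopAbGroup := {|
  carrier := M; add := madd; zero := mzero; opp := mopp;
  addA := maddA; addC := maddC; add0 := madd0; addN := maddN;
  is_open := mopen; open_full := mopen_full; open_inter := mopen_inter;
  open_union := mopen_union; add_cont := madd_cont; opp_cont := mopp_cont;
  hausdorff := mhausdorff |}.

Lemma metric_top_metrizable : metrizable metric_top.
Proof.
  exists mdist. split; [exact mdist_ge0|]. split; [exact mdist_eq0|].
  split; [exact mdist_sym|]. split; [exact mdist_tri|]. intros U; split; auto.
Qed.

Lemma connected_translate V a :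
  connected metric_top V -> connected metric_top (fun x => V (madd x a)).
Proof.
  intros HV [A [B [HA [HB [Hcov [[x [Vx Ax]] [[y [Vy By]] Hdis]]]]]]].
  apply HV. exists (fun z => A (madd z (mopp a))), (fun z => B (madd z (mopp a))).
  repeat split; try apply mopen_translate; try assumption.
  - intros z Vz. apply Hcov. rewrite maddNK; exact Vz.
  - exists (madd x a). rewrite maddK. auto.
  - exists (madd y a). rewrite maddK. auto.
  - intros z Vz. apply Hdis. rewrite maddNK; exact Vz.
Qed.

Lemma locally_connected_of_center c :
  (forall e, 0 < e -> exists V, mopen V /\ connected metric_top V /\ V c /\
     forall y, V y -> mdist c y < e) ->
  locally_connected metric_top.
Proof.
  intros Hc U x HU Ux. destruct (HU x Ux) as [e [He Hball]].
  destruct (Hc e He) as [V [HVo [HVc [Vc HVe]]]].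
  set (shift_to_c := fun y => madd (madd y (mopp x)) c).
  exists (fun y => V (shift_to_c y)). repeat split.
  - change (mopen (fun y => V (madd (madd y (mopp x)) c))).
    apply (mopen_translate (fun z => V (madd z c))), mopen_translate, HVo.
  - apply (connected_translate (fun z => V (madd z c))), connected_translate, HVc.
  - unfold shift_to_c. rewrite (maddC x), maddN, madd0. exact Vc.
  - intros y Vy. apply Hball. pose proof (HVe _ Vy) as D.
    assert (Ex : shift_to_c x = c)
      by (unfold shift_to_c; rewrite (maddC x), maddN, madd0; reflexivity).
    rewrite <- Ex in D. unfold shift_to_c in D. rewrite !mdist_addr in D. exact D.
Qed.
Lemma zero_dimensional_of_ultrametric : ultrametric M -> zero_dimensional metric_top.
Proof.
  intros Hu U x HU Ux. destruct (HU x Ux) as [e [He Hball]].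
  exists (fun y => mdist x y < e). repeat split.
  - apply mopen_ball.
  - intros y Hy. exists e. split; [exact He|]. intros z Hz Hxz. apply Hy.
    pose proof (Hu x z y) as T. rewrite (mdist_sym z y) in T.
    unfold Rmax in T; destruct Rle_dec; lra.
  - rewrite mdist_self; exact He.
  - exact Hball.
Qed.

(* Along a 1-Lipschitz path from a to b the supremum of the initial stretch
   staying in A cannot be followed by points of B, nor stop short of 1. *)
Lemma connected_of_lipschitz_paths V :
  (forall a b, V a -> V b -> exists path : R -> M, path 0 = a /\ path 1 = b /\
     (forall l, 0 <= l <= 1 -> V (path l)) /\
     (forall l m, 0 <= l <= 1 -> 0 <= m <= 1 -> mdist (path l) (path m) <= Rabs (l - m))) ->
  connected metric_top V.
Proof.
  intros Hpath [A [B [HA [HB [Hcov [[a [Va Aa]] [[b [Vb Bb]] Hdis]]]]]]].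
  destruct (Hpath a b Va Vb) as [path [P0 [P1 [PV PL]]]].
  set (in_A := fun l => 0 <= l <= 1 /\ forall m, 0 <= m <= l -> A (path m)).
  assert (A0 : in_A 0).
  { split; [lra|]. intros m Hm. replace m with 0 by lra. rewrite P0; exact Aa. }
  destruct (completeness in_A) as [L [Lub Lleast]];
    [exists 1; intros l [? _]; lra | exists 0; exact A0 |].
  assert (HL0 : 0 <= L) by (apply Lub; exact A0).
  assert (HL1 : L <= 1) by (apply Lleast; intros l [? _]; lra).
  assert (Happrox : forall e, 0 < e -> exists l, in_A l /\ L - e < l /\ l <= L).
  { intros e He. apply NNPP; intros Hn. assert (L <= L - e); [|lra].
    apply Lleast. intros l Al. apply Rnot_lt_le. intros Hl. apply Hn.
    exists l. repeat split; try apply Al; try apply Lub; auto. }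
  destruct (Hcov (path L) (PV L (conj HL0 HL1))) as [AL | BL].
  - destruct (HA _ AL) as [e [He HAe]].
    destruct (Happrox e He) as [l' [[Hl' Al'] [Hl'1 Hl'2]]].
    pose proof (Rmin_l 1 (L + e/2)); pose proof (Rmin_r 1 (L + e/2)).
    set (L' := Rmin 1 (L + e/2)) in *.
    assert (AL' : in_A L').
    { split; [split; [apply Rmin_glb|]; lra|].
      intros m Hm. destruct (Rle_lt_dec m l'); [apply Al'; lra|].
      apply HAe. eapply Rle_lt_trans; [apply PL; lra|].
      unfold Rabs; destruct Rcase_abs; lra. }
    assert (L = 1).
    { pose proof (Lub _ AL'). unfold L', Rmin in *; destruct Rle_dec; lra. }
    subst L. rewrite P1 in AL. exact (Hdis b Vb AL Bb).
  - destruct (HB _ BL) as [e [He HBe]].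
    destruct (Happrox e He) as [l' [[Hl' Al'] [Hl'1 Hl'2]]].
    apply (Hdis (path l')); [apply PV; exact Hl' | apply Al'; lra |].
    apply HBe. eapply Rle_lt_trans; [apply PL; lra|].
    unfold Rabs; destruct Rcase_abs; lra.
Qed.

(* König-style argument: if a cover had no finite subcover, choosing at each
   level a child cell that is still badly covered yields a branch p whose cells
   shrink to a point x; a single member of the cover around x then covers one
   of those cells. *)
Lemma compact_of_binary_cells (cell : (nat -> bool) -> nat -> M -> Prop) :
  (forall p x, cell p 0%nat x) ->
  (forall p p' k, (forall i, (i < k)%nat -> p i = p' i) ->
     forall x, cell p k x -> cell p' k x) ->
  (forall p k x, cell p k x -> exists b, cell (set_bit p k b) (S k) x) ->
  (forall p, exists x, forall e, 0 < e -> exists k, forall y, cell p k y -> mdist x y < e) ->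
  Defs.compact metric_top (fun _ => True).
Proof.
  intros Hroot Hprefix Hsplit Hshrink F HF Hcov.
  apply NNPP; intros Hno.
  set (bad := fun S : M -> Prop => ~ exists l, (forall U, In U l -> F U) /\
                 (forall x, S x -> exists U, In U l /\ U x)).
  assert (Hchild : forall p k, bad (cell p k) -> exists b, bad (cell (set_bit p k b) (S k))).
  { intros p k Hbad. apply NNPP; intros Hgood. apply Hbad.
    assert (Gf : ~ bad (cell (set_bit p k false) (S k))) by (intro; apply Hgood; eauto).
    assert (Gt : ~ bad (cell (set_bit p k true) (S k))) by (intro; apply Hgood; eauto).
    apply NNPP in Gf, Gt. destruct Gf as [l1 [F1 C1]], Gt as [l2 [F2 C2]].
    exists (l1 ++ l2). split.
    - intros U HU. apply in_app_or in HU. destruct HU; auto.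
    - intros x Hx. destruct (Hsplit p k x Hx) as [[|] Hb].
      + destruct (C2 x Hb) as [U [HU Ux]]. exists U. split; [apply in_or_app|]; auto.
      + destruct (C1 x Hb) as [U [HU Ux]]. exists U. split; [apply in_or_app|]; auto. }
  set (child := fun p k => epsilon (inhabits false) (fun b => bad (cell (set_bit p k b) (S k)))).
  set (prefix := fix prefix (k : nat) : nat -> bool :=
         match k with O => fun _ => false | S k => set_bit (prefix k) k (child (prefix k) k) end).
  assert (Hbad : forall k, bad (cell (prefix k) k)).
  { induction k as [|k IH].
    - intros [l [Fl Cl]]. apply Hno. exists l. split; [exact Fl|]. intros x _. apply Cl, Hroot.
    - simpl. unfold child. apply epsilon_spec, Hchild, IH. }
  set (p := fun i => prefix (S i) i).
  assert (Hp : forall k i, (i < k)%nat -> prefix k i = p i).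
  { intros k i Hik. induction Hik as [|k Hik IH]; [reflexivity|].
    simpl. unfold set_bit at 1. destruct Nat.eq_dec; [lia | exact IH]. }
  destruct (Hshrink p) as [x Hx]. destruct (Hcov x I) as [U [FU Ux]].
  destruct (HF U FU x Ux) as [e [He HU]]. destruct (Hx e He) as [k Hk].
  apply (Hbad k). exists (U :: nil). split.
  - intros V [<- | []]; exact FU.
  - intros y Hy. exists U. split; [left; reflexivity|].
    apply HU, Hk, (Hprefix (prefix k)); [apply Hp | exact Hy].
Qed.

End MetricTopology.

(** * Sequence spaces, discrete groups and products *)

Section SequenceSpace.
Variable K : MetricGroup.
Implicit Types t s u : nat -> K.

Definition seq_add t s : nat -> K := fun n => madd (t n) (s n).
Definition seq_zero : nat -> K := fun _ => mzero.
Definition seq_opp t : nat -> K := fun n => mopp (t n).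

Definition weighted_terms t s (r : R) : Prop := exists n, r = mdist (t n) (s n) * (/2)^n.

Lemma weighted_term_bounds t s n : 0 <= mdist (t n) (s n) * (/2)^n <= (/2)^n.
Proof.
  pose proof (mdist_ge0 (t n) (s n)); pose proof (mdist_le1 (t n) (s n)).
  pose proof (half_pow_pos n). split; nra.
Qed.

Lemma weighted_terms_bound t s : bound (weighted_terms t s).
Proof.
  exists 1. intros r [n ->].
  pose proof (weighted_term_bounds t s n); pose proof (half_pow_le1 n); lra.
Qed.

Lemma weighted_terms_inhabited t s : exists r, weighted_terms t s r.
Proof. eexists. exists 0%nat. reflexivity. Qed.

Definition seq_dist t s : R :=
  proj1_sig (completeness _ (weighted_terms_bound t s) (weighted_terms_inhabited t s)).

Lemma seq_dist_ge t s n : mdist (t n) (s n) * (/2)^n <= seq_dist t s.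
Proof. unfold seq_dist. destruct completeness as [m [Hub Hleast]]. apply Hub. exists n; reflexivity. Qed.

Lemma seq_dist_le t s c :
  (forall n, mdist (t n) (s n) * (/2)^n <= c) -> seq_dist t s <= c.
Proof.
  intros H. unfold seq_dist. destruct completeness as [m [Hub Hleast]].
  apply Hleast. intros r [n ->]. apply H.
Qed.

Lemma seq_dist_ge0 t s : 0 <= seq_dist t s.
Proof. pose proof (weighted_term_bounds t s 0%nat); pose proof (seq_dist_ge t s 0%nat). lra. Qed.

Lemma seq_dist_le1 t s : seq_dist t s <= 1.
Proof.
  apply seq_dist_le. intros n.
  pose proof (weighted_term_bounds t s n); pose proof (half_pow_le1 n); lra.
Qed.

Lemma seq_dist_eq0 t s : seq_dist t s = 0 <-> t = s.
Proof.
  split.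
  - intros H. extensionality n. apply mdist_eq0.
    pose proof (seq_dist_ge t s n); pose proof (mdist_ge0 (t n) (s n)).
    pose proof (half_pow_pos n). nra.
  - intros ->. apply Rle_antisym; [|apply seq_dist_ge0].
    apply seq_dist_le. intros n. rewrite mdist_self. lra.
Qed.

Lemma seq_dist_sym t s : seq_dist t s = seq_dist s t.
Proof. apply Rle_antisym; apply seq_dist_le; intros n; rewrite mdist_sym; apply seq_dist_ge. Qed.

Lemma seq_dist_tri t s u : seq_dist t u <= seq_dist t s + seq_dist s u.
Proof.
  apply seq_dist_le. intros n.
  pose proof (seq_dist_ge t s n); pose proof (seq_dist_ge s u n).
  pose proof (mdist_tri (t n) (s n) (u n)); pose proof (half_pow_pos n). nra.
Qed.

Lemma seq_dist_addr t s a : seq_dist (seq_add t a) (seq_add s a) = seq_dist t s.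
Proof.
  unfold seq_add. apply Rle_antisym; apply seq_dist_le; intros n.
  - rewrite mdist_addr. apply seq_dist_ge.
  - rewrite <- (mdist_addr (t n) (s n) (a n)).
    apply (seq_dist_ge (seq_add t a) (seq_add s a)).
Qed.

Lemma seq_addA t s u : seq_add t (seq_add s u) = seq_add (seq_add t s) u.
Proof. extensionality n. apply maddA. Qed.

Lemma seq_addC t s : seq_add t s = seq_add s t.
Proof. extensionality n. apply maddC. Qed.

Lemma seq_add0 t : seq_add seq_zero t = t.
Proof. extensionality n. apply madd0. Qed.

Lemma seq_addN t : seq_add (seq_opp t) t = seq_zero.
Proof. extensionality n. apply maddN. Qed.

Definition seqspace : MetricGroup := {|
  mcar := nat -> K; madd := seq_add; mzero := seq_zero; mopp := seq_opp;
  maddA := seq_addA; maddC := seq_addC; madd0 := seq_add0; maddN := seq_addN;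
  mdist := seq_dist; mdist_ge0 := seq_dist_ge0; mdist_le1 := seq_dist_le1;
  mdist_eq0 := seq_dist_eq0; mdist_sym := seq_dist_sym; mdist_tri := seq_dist_tri;
  mdist_addr := seq_dist_addr |}.

Lemma seqspace_ultrametric : ultrametric K -> ultrametric seqspace.
Proof.
  intros Hu t s u. simpl. apply seq_dist_le. intros n.
  pose proof (seq_dist_ge t s n); pose proof (seq_dist_ge s u n).
  pose proof (Hu (t n) (s n) (u n)); pose proof (half_pow_pos n).
  apply Rle_trans with (Rmax (mdist (t n) (s n)) (mdist (s n) (u n)) * (/2)^n); [nra|].
  unfold Rmax in *. destruct Rle_dec; destruct Rle_dec; nra.
Qed.

End SequenceSpace.

Section DiscreteMetric.
Context {T : Type}.

Definition discrete_dist (x y : T) : R :=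
  if excluded_middle_informative (x = y) then 0 else 1.

Ltac discrete_cases :=
  unfold discrete_dist; repeat destruct excluded_middle_informative; subst; try congruence.

Lemma discrete_dist_ge0 x y : 0 <= discrete_dist x y.
Proof. discrete_cases; lra. Qed.

Lemma discrete_dist_le1 x y : discrete_dist x y <= 1.
Proof. discrete_cases; lra. Qed.

Lemma discrete_dist_eq0 x y : discrete_dist x y = 0 <-> x = y.
Proof. discrete_cases; split; intros; try lra; congruence. Qed.

Lemma discrete_dist_lt1 x y : discrete_dist x y < 1 -> x = y.
Proof. discrete_cases; lra. Qed.

Lemma discrete_dist_sym x y : discrete_dist x y = discrete_dist y x.
Proof. discrete_cases. Qed.

Lemma discrete_dist_tri x y z : discrete_dist x z <= discrete_dist x y + discrete_dist y z.
Proof. discrete_cases; lra. Qed.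

Lemma discrete_dist_ultra x y z :
  discrete_dist x z <= Rmax (discrete_dist x y) (discrete_dist y z).
Proof. discrete_cases; unfold Rmax; destruct Rle_dec; lra. Qed.

Lemma discrete_dist_inj (f : T -> T) :
  (forall x y, f x = f y -> x = y) -> forall x y, discrete_dist (f x) (f y) = discrete_dist x y.
Proof. intros Hf x y. discrete_cases. exfalso; auto. Qed.

End DiscreteMetric.

Definition discretize (M : MetricGroup) : MetricGroup := {|
  mcar := M; madd := madd; mzero := mzero; mopp := mopp;
  maddA := maddA; maddC := maddC; madd0 := madd0; maddN := maddN;
  mdist := discrete_dist; mdist_ge0 := discrete_dist_ge0; mdist_le1 := discrete_dist_le1;
  mdist_eq0 := discrete_dist_eq0; mdist_sym := discrete_dist_sym;
  mdist_tri := discrete_dist_tri;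
  mdist_addr := fun x y a => discrete_dist_inj _ (madd_injr M a) x y |}.

Lemma discretize_ultrametric M : ultrametric (discretize M).
Proof. exact discrete_dist_ultra. Qed.

Section Product.
Variables M N : MetricGroup.
Implicit Types x y z : M * N.

Definition pair_add x y : M * N := (madd (fst x) (fst y), madd (snd x) (snd y)).
Definition pair_zero : M * N := (mzero, mzero).
Definition pair_opp x : M * N := (mopp (fst x), mopp (snd x)).
Definition pair_dist x y : R := Rmax (mdist (fst x) (fst y)) (mdist (snd x) (snd y)).

Lemma pair_addA x y z : pair_add x (pair_add y z) = pair_add (pair_add x y) z.
Proof. unfold pair_add; simpl; rewrite !maddA; reflexivity. Qed.

Lemma pair_addC x y : pair_add x y = pair_add y x.
Proof. unfold pair_add; rewrite (maddC (fst x)), (maddC (snd x)); reflexivity. Qed.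

Lemma pair_add0 x : pair_add pair_zero x = x.
Proof. destruct x; unfold pair_add; simpl; rewrite !madd0; reflexivity. Qed.

Lemma pair_addN x : pair_add (pair_opp x) x = pair_zero.
Proof. unfold pair_add; simpl; rewrite !maddN; reflexivity. Qed.

Ltac max_cases := unfold pair_dist, Rmax in *; repeat destruct Rle_dec; lra.

Lemma pair_dist_ge0 x y : 0 <= pair_dist x y.
Proof. pose proof (mdist_ge0 (fst x) (fst y)); max_cases. Qed.

Lemma pair_dist_le1 x y : pair_dist x y <= 1.
Proof. pose proof (mdist_le1 (fst x) (fst y)); pose proof (mdist_le1 (snd x) (snd y)); max_cases. Qed.

Lemma pair_dist_eq0 x y : pair_dist x y = 0 <-> x = y.
Proof.
  destruct x as [x1 x2], y as [y1 y2]. simpl. split.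
  - intros H. unfold pair_dist in H; simpl in H.
    pose proof (mdist_ge0 x1 y1); pose proof (mdist_ge0 x2 y2).
    rewrite (proj1 (mdist_eq0 x1 y1)), (proj1 (mdist_eq0 x2 y2)); [reflexivity | max_cases ..].
  - intros [= -> ->]. unfold pair_dist; simpl. rewrite !mdist_self. max_cases.
Qed.

Lemma pair_dist_sym x y : pair_dist x y = pair_dist y x.
Proof. unfold pair_dist; rewrite (mdist_sym (fst x)), (mdist_sym (snd x)); reflexivity. Qed.

Lemma pair_dist_tri x y z : pair_dist x z <= pair_dist x y + pair_dist y z.
Proof.
  pose proof (mdist_tri (fst x) (fst y) (fst z)); pose proof (mdist_tri (snd x) (snd y) (snd z)).
  pose proof (mdist_ge0 (fst x) (fst y)); pose proof (mdist_ge0 (snd x) (snd y)).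
  pose proof (mdist_ge0 (fst y) (fst z)); pose proof (mdist_ge0 (snd y) (snd z)).
  max_cases.
Qed.

Lemma pair_dist_addr x y a : pair_dist (pair_add x a) (pair_add y a) = pair_dist x y.
Proof. unfold pair_dist, pair_add; simpl; rewrite !mdist_addr; reflexivity. Qed.

Definition prod_group : MetricGroup := {|
  mcar := M * N; madd := pair_add; mzero := pair_zero; mopp := pair_opp;
  maddA := pair_addA; maddC := pair_addC; madd0 := pair_add0; maddN := pair_addN;
  mdist := pair_dist; mdist_ge0 := pair_dist_ge0; mdist_le1 := pair_dist_le1;
  mdist_eq0 := pair_dist_eq0; mdist_sym := pair_dist_sym; mdist_tri := pair_dist_tri;
  mdist_addr := pair_dist_addr |}.

Lemma prod_ultrametric : ultrametric M -> ultrametric N -> ultrametric prod_group.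
Proof.
  intros HM HN x y z. simpl.
  pose proof (HM (fst x) (fst y) (fst z)); pose proof (HN (snd x) (snd y) (snd z)).
  max_cases.
Qed.

Lemma mopen_snd V : mopen N V -> mopen prod_group (fun x => V (snd x)).
Proof.
  intros HV x Vx. destruct (HV _ Vx) as [e [He H]].
  exists e. split; [exact He|]. intros y Hy. apply H.
  pose proof (Rmax_r (mdist (fst x) (fst y)) (mdist (snd x) (snd y))). simpl in Hy.
  unfold pair_dist in Hy. lra.
Qed.

End Product.

Section DiscreteProduct.
Variables M N : MetricGroup.
Implicit Types x y : prod_group (discretize M) N.

Lemma fiber_dist_lt1 x y : mdist x y < 1 -> fst x = fst y.
Proof.
  intros H. apply discrete_dist_lt1. eapply Rle_lt_trans; [apply Rmax_l | exact H].
Qed.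

Lemma fiber_dist x y : fst x = fst y -> mdist x y = mdist (snd x) (snd y).
Proof.
  intros E. change (Rmax (discrete_dist (fst x) (fst y)) (mdist (snd x) (snd y))
                     = mdist (snd x) (snd y)).
  unfold discrete_dist. destruct excluded_middle_informative; [|contradiction].
  apply Rmax_right, mdist_ge0.
Qed.

Lemma mopen_fiber (u : M) : mopen (prod_group (discretize M) N) (fun y => fst y = u).
Proof.
  intros x Hx. exists 1. split; [lra|]. intros y Hy.
  rewrite <- (fiber_dist_lt1 x y Hy). exact Hx.
Qed.

Lemma mopen_slice (u : M) W :
  mopen (prod_group (discretize M) N) W -> mopen N (fun s => W (u, s)).
Proof.
  intros HW s Ws. destruct (HW _ Ws) as [e [He H]].
  exists e. split; [exact He|]. intros s' Hs'. apply H. rewrite fiber_dist; auto.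
Qed.

Lemma discrete_prod_locally_compact :
  Defs.compact (metric_top N) (fun _ => True) ->
  locally_compact (metric_top (prod_group (discretize M) N)).
Proof.
  intros HN [u t]. set (fiber := fun y : prod_group (discretize M) N => fst y = u).
  exists fiber, fiber. split; [apply mopen_fiber|]. split; [reflexivity|].
  split; [|auto]. intros F HF Hcov.
  set (slice := fun W (s : N) => W (u, s) : Prop).
  set (lift := fun V => epsilon (inhabits (fun _ => True))
                          (fun W => F W /\ V = slice W)).
  destruct (HN (fun V => exists W, F W /\ V = slice W)) as [l [Fl Cl]].
  - intros V [W [FW ->]]. apply mopen_slice, HF, FW.
  - intros s _. destruct (Hcov (u, s) eq_refl) as [W [FW Ws]].
    exists (slice W). split; [exists W; auto | exact Ws].
  - assert (Hlift : forall V, In V l -> F (lift V) /\ V = slice (lift V))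
      by (intros V HV; apply (epsilon_spec _ _ (Fl V HV))).
    exists (map lift l). split.
    + intros W HW. apply in_map_iff in HW. destruct HW as [V [<- HV]]. apply Hlift, HV.
    + intros [u' s] Hu. unfold fiber in Hu; simpl in Hu; subst u'.
      destruct (Cl s I) as [V [HV Vs]]. exists (lift V). split; [apply in_map, HV|].
      destruct (Hlift V HV) as [_ E]. rewrite E in Vs. exact Vs.
Qed.

Lemma discrete_prod_locally_connected :
  locally_connected (metric_top N) ->
  locally_connected (metric_top (prod_group (discretize M) N)).
Proof.
  intros HN U [u t] HU Ut.
  destruct (HN (fun s => U (u, s)) t (mopen_slice u U HU) Ut) as [V [HVo [HVc [Vt HVU]]]].
  exists (fun y => fst y = u /\ V (snd y)). split; [|split; [|split]].
  - apply (mopen_inter (prod_group (discretize M) N)); [apply mopen_fiber | apply mopen_snd, HVo].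
  - intros [A [B [HA [HB [Hcov [[a [Va Aa]] [[b [Vb Bb]] Hdis]]]]]]].
    apply HVc. exists (fun s => A (u, s)), (fun s => B (u, s)).
    split; [apply mopen_slice, HA|]. split; [apply mopen_slice, HB|].
    split; [intros s Vs; apply Hcov; simpl; auto|]. split.
    + exists (snd a). destruct a as [ua sa], Va as [Ea Va]; simpl in *; subst; auto.
    + split; [exists (snd b); destruct b as [ub sb], Vb as [Eb Vb]; simpl in *; subst; auto|].
      intros s Vs. apply (Hdis (u, s)). simpl; auto.
  - simpl; auto.
  - intros [u' s] [Eu Vs]. simpl in Eu; subst u'. apply HVU, Vs.
Qed.

End DiscreteProduct.

(** * The shift automorphism *)

Section Shift.
Variable K : MetricGroup.
Implicit Types (a t : nat -> K).

Definition evens t : nat -> K := fun n => t (2 * n)%nat.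
Definition odds t : nat -> K := fun n => t (S (2 * n)).
Definition interleave a t : nat -> K :=
  fun m => if Nat.even m then a (Nat.div2 m) else t (Nat.div2 m).

Lemma interleave_even a t n : interleave a t (2 * n)%nat = a n.
Proof. unfold interleave. rewrite Nat.even_mul, Nat.div2_double. reflexivity. Qed.

Lemma interleave_odd a t n : interleave a t (S (2 * n)) = t n.
Proof. unfold interleave. rewrite Nat.even_succ, Nat.odd_mul, Nat.div2_succ_double. reflexivity. Qed.

Lemma nat_double_cases m : exists n, m = (2 * n)%nat \/ m = S (2 * n).
Proof. destruct (Nat.Even_or_Odd m) as [[n Hn] | [n Hn]]; exists n; lia. Qed.

Lemma seq_dist_interleave a t t' :
  seq_dist K (interleave a t) (interleave a t') <= seq_dist K t t' / 2.
Proof.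
  apply seq_dist_le. intros m. destruct (nat_double_cases m) as [n [-> | ->]].
  - rewrite !interleave_even, mdist_self. pose proof (seq_dist_ge0 K t t'). lra.
  - rewrite !interleave_odd.
    pose proof (seq_dist_ge K t t' n); pose proof (mdist_ge0 (t n) (t' n)).
    assert ((/2)^(S (2 * n)) <= /2 * (/2)^n).
    { change ((/2)^(S (2 * n))) with (/2 * (/2)^(2 * n)).
      pose proof (half_pow_le n (2 * n) ltac:(lia)). lra. }
    apply Rle_trans with (mdist (t n) (t' n) * (/2 * (/2)^n)); [apply Rmult_le_compat_l|]; nra.
Qed.

Definition shift_group : MetricGroup := prod_group (discretize (seqspace K)) (seqspace K).

Definition shift (x : shift_group) : shift_group :=
  (evens (fst x), interleave (odds (fst x)) (snd x)).

Lemma shift_continuous : continuous (metric_top shift_group) shift.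
Proof.
  intros W HW x Wx. destruct (HW _ Wx) as [e [He H]]. unfold shift_group in *.
  exists (Rmin 1 e). split; [apply Rmin_glb_lt; lra|]. intros y Hy.
  assert (E : fst x = fst y)
    by (apply fiber_dist_lt1; eapply Rlt_le_trans; [exact Hy | apply Rmin_l]).
  pose proof (Rmin_r 1 e).
  apply H. rewrite fiber_dist by (unfold shift; simpl; f_equal; exact E).
  rewrite fiber_dist in Hy by exact E. simpl in *. rewrite E.
  pose proof (seq_dist_interleave (odds (fst y)) (snd x) (snd y)).
  pose proof (seq_dist_ge0 K (snd x) (snd y)). lra.
Qed.

Lemma shift_cont_automorphism : cont_automorphism (metric_top shift_group) shift.
Proof.
  split; [|split; [|split]].
  - intros [u t] [v s]. unfold shift; simpl. unfold pair_add; simpl. f_equal.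
    extensionality m. unfold interleave, seq_add, odds. destruct (Nat.even m); reflexivity.
  - intros [u t] [v s] H. unfold shift in H; simpl in H. injection H as Hev Hint.
    assert (Ht : t = s).
    { extensionality n. rewrite <- (interleave_odd (odds u) t n), Hint. apply interleave_odd. }
    assert (Hu : u = v).
    { extensionality m. destruct (nat_double_cases m) as [n [-> | ->]].
      - exact (f_equal (fun w => w n) Hev).
      - change (odds u n = odds v n).
        rewrite <- (interleave_even (odds u) t n), Hint. apply interleave_even. }
    subst; reflexivity.
  - intros [v s]. exists (interleave v (evens s), odds s). unfold shift; simpl. f_equal.
    + extensionality n. apply interleave_even.
    + extensionality m. destruct (nat_double_cases m) as [n [-> | ->]].
      * rewrite interleave_even. exact (interleave_odd _ _ n).
      * exact (interleave_odd _ _ n).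
  - apply shift_continuous.
Qed.

(* Points of the image of the fiber over 0 vanish at the even places of their
   second component, so the image contains no ball around 0. *)
Lemma shift_not_open_map : (exists a : K, a <> mzero) -> ~ open_map (metric_top shift_group) shift.
Proof.
  intros [a Ha] Hopen.
  destruct (Hopen (fun x : shift_group => fst x = seq_zero K) (mopen_fiber _ _ _) (shift mzero))
    as [e [He Hball]]; [exists mzero; split; reflexivity|].
  destruct (half_pow_lt e He) as [n Hn]. unfold shift_group in *.
  set (spike := fun j => if Nat.eq_dec j (2 * n) then a else mzero).
  destruct (Hball (seq_zero K, spike)) as [[u t] [Hu Hshift]].
  - rewrite fiber_dist by reflexivity. simpl.
    apply Rle_lt_trans with ((/2)^n); [|exact Hn].
    apply seq_dist_le. intros j. unfold spike.
    replace (interleave (odds (seq_zero K)) (seq_zero K) j) with (@mzero K)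
      by (unfold interleave; destruct Nat.even; reflexivity).
    destruct Nat.eq_dec as [-> | _].
    + pose proof (mdist_le1 mzero a); pose proof (mdist_ge0 mzero a).
      pose proof (half_pow_le n (2 * n) ltac:(lia)); pose proof (half_pow_pos (2 * n)). nra.
    + rewrite mdist_self, Rmult_0_l. left; apply half_pow_pos.
  - simpl in Hu; subst u. unfold shift in Hshift; simpl in Hshift. injection Hshift as Hint.
    apply Ha. transitivity (spike (2 * n)%nat).
    + unfold spike. destruct Nat.eq_dec; [reflexivity | lia].
    + rewrite <- Hint. exact (interleave_even _ _ n).
Qed.

Lemma shift_group_not_g_reversible :
  (exists a : K, a <> mzero) -> ~ g_reversible (metric_top shift_group).
Proof.
  intros Hnontriv Hrev. exact (shift_not_open_map Hnontriv (Hrev shift shift_cont_automorphism)).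
Qed.

End Shift.

(** * The two examples *)

Lemma xorb_injr a x y : xorb x a = xorb y a -> x = y.
Proof. destruct a, x, y; simpl; congruence. Qed.

Definition Z2 : MetricGroup := {|
  mcar := bool; madd := xorb; mzero := false; mopp := fun b => b;
  maddA := fun x y z => eq_sym (xorb_assoc_reverse x y z); maddC := xorb_comm;
  madd0 := xorb_false_l; maddN := xorb_nilpotent;
  mdist := discrete_dist; mdist_ge0 := discrete_dist_ge0; mdist_le1 := discrete_dist_le1;
  mdist_eq0 := discrete_dist_eq0; mdist_sym := discrete_dist_sym;
  mdist_tri := discrete_dist_tri;
  mdist_addr := fun x y a => discrete_dist_inj _ (xorb_injr a) x y |}.

Lemma Z2_ultrametric : ultrametric Z2.
Proof. exact discrete_dist_ultra. Qed.

Lemma seqspace_Z2_compact : Defs.compact (metric_top (seqspace Z2)) (fun _ => True).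
Proof.
  apply (compact_of_binary_cells (seqspace Z2)
           (fun p k (t : nat -> bool) => forall i, (i < k)%nat -> t i = p i)).
  - intros p t i Hi; lia.
  - intros p p' k Hpp' t Ht i Hi. rewrite Ht, Hpp'; auto.
  - intros p k t Ht. exists (t k). intros i Hi. unfold set_bit.
    destruct Nat.eq_dec as [-> | Hik]; [reflexivity | apply Ht; lia].
  - intros p. exists p. intros e He. destruct (half_pow_lt e He) as [k Hk].
    exists k. intros t Ht. apply Rle_lt_trans with ((/2)^k); [|exact Hk].
    apply seq_dist_le. intros i. destruct (Nat.lt_ge_cases i k) as [Hik | Hik].
    + rewrite Ht by exact Hik. rewrite mdist_self. pose proof (half_pow_pos k). lra.
    + pose proof (weighted_term_bounds Z2 p t i); pose proof (half_pow_le k i Hik). lra.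
Qed.

Lemma shift_group_Z2_zero_dimensional : zero_dimensional (metric_top (shift_group Z2)).
Proof.
  apply zero_dimensional_of_ultrametric, prod_ultrametric;
    [apply discretize_ultrametric | apply seqspace_ultrametric, Z2_ultrametric].
Qed.

Lemma shift_group_Z2_add_self (x : metric_top (shift_group Z2)) : add x x = zero.
Proof.
  destruct x as [u t]. simpl. unfold pair_add, pair_zero; simpl.
  f_equal; extensionality n; apply xorb_nilpotent.
Qed.

Definition Circle : Type := {x : R | 0 <= x < 1}.

Definition cval (x : Circle) : R := proj1_sig x.

Lemma cval_range x : 0 <= cval x < 1.
Proof. exact (proj2_sig x). Qed.

Lemma circle_eq x y : cval x = cval y -> x = y.
Proof. destruct x, y; simpl; intros ->; f_equal; apply proof_irrelevance. Qed.

(* Sends 1 to 0, as the circle should; other values outside [0,1) never occur. *)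
Definition clamp01 (z : R) : R := if Rle_dec 0 z then if Rlt_dec z 1 then z else 0 else 0.

Lemma clamp01_range z : 0 <= clamp01 z < 1.
Proof. unfold clamp01; destruct Rle_dec; [destruct Rlt_dec|]; lra. Qed.

Definition to_circle (z : R) : Circle := exist _ (clamp01 z) (clamp01_range z).

Lemma cval_to_circle z : 0 <= z < 1 -> cval (to_circle z) = z.
Proof. intros Hz; simpl; unfold clamp01; destruct Rle_dec; [destruct Rlt_dec|]; lra. Qed.

Definition add_mod1 (a b : R) : R := if Rlt_dec (a + b) 1 then a + b else a + b - 1.
Definition opp_mod1 (a : R) : R := if Req_EM_T a 0 then 0 else 1 - a.

Definition circle_add x y : Circle := to_circle (add_mod1 (cval x) (cval y)).
Definition circle_opp x : Circle := to_circle (opp_mod1 (cval x)).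
Definition circle_zero : Circle := to_circle 0.

Lemma cval_add x y : cval (circle_add x y) = add_mod1 (cval x) (cval y).
Proof.
  apply cval_to_circle. pose proof (cval_range x); pose proof (cval_range y).
  unfold add_mod1; destruct Rlt_dec; lra.
Qed.

Lemma cval_opp x : cval (circle_opp x) = opp_mod1 (cval x).
Proof.
  apply cval_to_circle. pose proof (cval_range x). unfold opp_mod1; destruct Req_EM_T; lra.
Qed.

Lemma cval_zero : cval circle_zero = 0.
Proof. apply cval_to_circle; lra. Qed.

Lemma circle_addA x y z : circle_add x (circle_add y z) = circle_add (circle_add x y) z.
Proof.
  apply circle_eq. rewrite !cval_add.
  pose proof (cval_range x); pose proof (cval_range y); pose proof (cval_range z).
  unfold add_mod1; repeat destruct Rlt_dec; lra.
Qed.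

Lemma circle_addC x y : circle_add x y = circle_add y x.
Proof. apply circle_eq. rewrite !cval_add. unfold add_mod1. rewrite Rplus_comm. reflexivity. Qed.

Lemma circle_add0 x : circle_add circle_zero x = x.
Proof.
  apply circle_eq. rewrite cval_add, cval_zero. pose proof (cval_range x).
  unfold add_mod1; destruct Rlt_dec; lra.
Qed.

Lemma circle_addN x : circle_add (circle_opp x) x = circle_zero.
Proof.
  apply circle_eq. rewrite cval_add, cval_opp, cval_zero. pose proof (cval_range x).
  unfold add_mod1, opp_mod1; destruct Req_EM_T; destruct Rlt_dec; lra.
Qed.

Definition arc_dist (a b : R) : R := Rmin (Rabs (a - b)) (1 - Rabs (a - b)).

Lemma arc_dist_le_abs a b : arc_dist a b <= Rabs (a - b).
Proof. apply Rmin_l. Qed.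

Lemma arc_dist_le_compl a b : arc_dist a b <= 1 - Rabs (a - b).
Proof. apply Rmin_r. Qed.

Definition circle_dist x y : R := arc_dist (cval x) (cval y).

Ltac arc_cases x y :=
  unfold circle_dist, arc_dist, Rmin, Rabs in *;
  pose proof (cval_range x); pose proof (cval_range y);
  repeat (destruct Rle_dec || destruct Rcase_abs); lra.

Lemma circle_dist_ge0 x y : 0 <= circle_dist x y.
Proof. arc_cases x y. Qed.

Lemma circle_dist_le1 x y : circle_dist x y <= 1.
Proof. arc_cases x y. Qed.

Lemma circle_dist_eq0 x y : circle_dist x y = 0 <-> x = y.
Proof.
  split; [intros H; apply circle_eq; arc_cases x y|].
  intros ->. arc_cases y y.
Qed.

Lemma circle_dist_sym x y : circle_dist x y = circle_dist y x.
Proof. arc_cases x y. Qed.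

Lemma circle_dist_tri x y z : circle_dist x z <= circle_dist x y + circle_dist y z.
Proof. pose proof (cval_range z). arc_cases x y. Qed.

Lemma circle_dist_addr x y a : circle_dist (circle_add x a) (circle_add y a) = circle_dist x y.
Proof.
  unfold circle_dist. rewrite !cval_add. pose proof (cval_range a).
  unfold add_mod1; destruct Rlt_dec; destruct Rlt_dec; arc_cases x y.
Qed.

Definition circle : MetricGroup := {|
  mcar := Circle; madd := circle_add; mzero := circle_zero; mopp := circle_opp;
  maddA := circle_addA; maddC := circle_addC; madd0 := circle_add0; maddN := circle_addN;
  mdist := circle_dist; mdist_ge0 := circle_dist_ge0; mdist_le1 := circle_dist_le1;
  mdist_eq0 := circle_dist_eq0; mdist_sym := circle_dist_sym; mdist_tri := circle_dist_tri;
  mdist_addr := circle_dist_addr |}.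

(* Step k of the bisection halves coordinate k - floor(sqrt k)^2, so coordinate
   n is halved at every step s*s + n with n <= 2s. *)
Definition bisected_coord (k : nat) : nat := (k - Nat.sqrt k * Nat.sqrt k)%nat.

Lemma bisected_coord_square s n : (n <= 2 * s)%nat -> bisected_coord (s * s + n) = n.
Proof. intros H. unfold bisected_coord. rewrite (Nat.sqrt_unique (s * s + n) s) by lia. lia. Qed.

Definition halve (b : bool) (iv : R * R) : R * R :=
  if b then ((fst iv + snd iv) / 2, snd iv) else (fst iv, (fst iv + snd iv) / 2).

Fixpoint box (p : nat -> bool) (k : nat) : nat -> R * R :=
  match k with
  | O => fun _ => (0, 1)
  | S k => fun n => if Nat.eq_dec n (bisected_coord k) then halve (p k) (box p k n) else box p k n
  end.

Definition box_len p k n : R := snd (box p k n) - fst (box p k n).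

Lemma box_prefix p p' k :
  (forall i, (i < k)%nat -> p i = p' i) -> forall n, box p k n = box p' k n.
Proof.
  induction k as [|k IH]; intros H n; simpl; [reflexivity|].
  rewrite IH by (intros; apply H; lia). rewrite H by lia. reflexivity.
Qed.

Lemma box_wf p k n : fst (box p k n) <= snd (box p k n).
Proof.
  induction k as [|k IH]; simpl; [lra|].
  destruct Nat.eq_dec; [unfold halve; destruct (p k); simpl|]; lra.
Qed.

Lemma box_mono p k k' n : (k <= k')%nat ->
  fst (box p k n) <= fst (box p k' n) /\ snd (box p k' n) <= snd (box p k n).
Proof.
  induction 1 as [|k' _ IH]; [lra|]. pose proof (box_wf p k' n). simpl.
  destruct Nat.eq_dec; [unfold halve; destruct (p k'); simpl|]; lra.
Qed.

Lemma box_len_halve p s n :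
  (n <= 2 * s)%nat -> box_len p (S (s * s + n)) n = box_len p (s * s + n) n / 2.
Proof.
  intros H. unfold box_len; simpl box. rewrite bisected_coord_square by exact H.
  destruct Nat.eq_dec; [|lia]. unfold halve; destruct (p _); simpl; lra.
Qed.

Lemma box_len_bound p n j : box_len p (S ((n + j) * (n + j) + n)) n <= (/2)^(S j).
Proof.
  induction j as [|j IH].
  - rewrite box_len_halve by lia. pose proof (box_mono p 0 ((n + 0) * (n + 0) + n) n ltac:(lia)).
    unfold box_len in *; simpl in *; lra.
  - rewrite box_len_halve by lia.
    pose proof (box_mono p (S ((n + j) * (n + j) + n)) ((n + S j) * (n + S j) + n) n ltac:(nia)).
    change ((/2)^(S (S j))) with (/2 * (/2)^(S j)). unfold box_len in *. lra.
Qed.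

Lemma box_len_small p N e : 0 < e -> exists k, forall n, (n <= N)%nat -> box_len p k n < e.
Proof.
  intros He. destruct (half_pow_lt e He) as [j Hj]. exists (S ((N + j) * (N + j) + N)).
  intros n Hn. pose proof (box_len_bound p n j).
  pose proof (box_mono p (S ((n + j) * (n + j) + n)) (S ((N + j) * (N + j) + N)) n ltac:(nia)).
  pose proof (half_pow_le j (S j) ltac:(lia)). unfold box_len in *. lra.
Qed.

Lemma box_limit p n : exists y, forall k, fst (box p k n) <= y <= snd (box p k n).
Proof.
  set (lefts := fun r => exists k, r = fst (box p k n)).
  destruct (completeness lefts) as [y [Hub Hleast]].
  - exists 1. intros r [k ->]. pose proof (box_mono p 0 k n ltac:(lia)).
    pose proof (box_wf p k n). simpl in *; lra.
  - exists 0. exists 0%nat. reflexivity.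
  - exists y. intros k. split; [apply Hub; exists k; reflexivity|].
    apply Hleast. intros r [k' ->]. pose proof (box_wf p k n); pose proof (box_wf p k' n).
    destruct (Nat.le_ge_cases k k') as [Hkk' | Hkk'];
      pose proof (box_mono p _ _ n Hkk'); lra.
Qed.

Definition in_box p k (t : nat -> circle) : Prop :=
  forall n, fst (box p k n) <= cval (t n) <= snd (box p k n).

Lemma in_box_dist p k (y : nat -> R) (t : nat -> circle) n :
  (forall k, fst (box p k n) <= y n <= snd (box p k n)) -> in_box p k t ->
  circle_dist (to_circle (y n)) (t n) <= box_len p k n.
Proof.
  intros Hy Ht. specialize (Ht n). pose proof (Hy k); pose proof (Hy 0%nat) as H0.
  simpl in H0. pose proof (cval_range (t n)). unfold circle_dist, box_len.
  destruct (Rlt_dec (y n) 1).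
  - rewrite cval_to_circle by lra. eapply Rle_trans; [apply arc_dist_le_abs|].
    unfold Rabs; destruct Rcase_abs; lra.
  - assert (Hv : cval (to_circle (y n)) = 0)
      by (simpl; unfold clamp01; destruct Rle_dec; [destruct Rlt_dec|]; lra).
    rewrite Hv. eapply Rle_trans; [apply arc_dist_le_compl|].
    unfold Rabs; destruct Rcase_abs; lra.
Qed.

Lemma seqspace_circle_compact : Defs.compact (metric_top (seqspace circle)) (fun _ => True).
Proof.
  apply (compact_of_binary_cells (seqspace circle) in_box).
  - intros p t n. simpl. pose proof (cval_range (t n)). lra.
  - intros p p' k H t Ht n. rewrite <- (box_prefix p p' k H). apply Ht.
  - intros p k t Ht. set (n := bisected_coord k). set (iv := box p k n).
    assert (Hk : forall b, box (set_bit p k b) k = box p k).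
    { intros b. extensionality m. apply box_prefix. intros i Hi.
      unfold set_bit. destruct Nat.eq_dec; [lia | reflexivity]. }
    exists (if Rle_dec (cval (t n)) ((fst iv + snd iv) / 2) then false else true).
    intros m. simpl. rewrite Hk. destruct Nat.eq_dec as [-> | _]; [|apply Ht].
    unfold set_bit. destruct Nat.eq_dec; [|lia]. specialize (Ht (bisected_coord k)).
    fold n iv in Ht |- *. unfold halve. destruct Rle_dec; simpl; lra.
  - intros p. destruct (choice _ (box_limit p)) as [y Hy].
    exists (fun n => to_circle (y n)). intros e He.
    destruct (half_pow_lt (e/2)) as [N HN]; [lra|].
    destruct (box_len_small p N (e/2)) as [k Hk]; [lra|].
    exists k. intros t Ht. apply Rle_lt_trans with (e/2); [|lra].
    apply seq_dist_le. intros n. simpl.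
    pose proof (weighted_term_bounds circle (fun n => to_circle (y n)) t n). simpl in *.
    destruct (Nat.le_gt_cases n N) as [HnN | HnN].
    + pose proof (in_box_dist p k y t n (Hy n) Ht); pose proof (Hk n HnN).
      pose proof (half_pow_pos n); pose proof (half_pow_le1 n).
      pose proof (circle_dist_ge0 (to_circle (y n)) (t n)). nra.
    + pose proof (half_pow_le N n ltac:(lia)). lra.
Qed.

Definition half_turns : nat -> circle := fun _ => to_circle (1/2).

(* Near the antipode 1/2 of 0 no coordinate wraps around, so segments between
   representatives in [0,1) stay in the neighbourhood. *)
Definition near_half_turns (N : nat) (rho : R) (w : nat -> circle) : Prop :=
  forall n, (n < N)%nat -> Rabs (cval (w n) - 1/2) < rho.

Lemma mopen_near_half_coord n rho :
  rho <= 1/4 -> mopen (seqspace circle) (fun w => Rabs (cval (w n) - 1/2) < rho).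
Proof.
  intros Hrho w Hw. set (delta := rho - Rabs (cval (w n) - 1/2)).
  exists (delta * (/2)^n). split; [apply Rmult_lt_0_compat; [unfold delta; lra | apply half_pow_pos]|].
  intros w' Hw'. pose proof (seq_dist_ge circle w w' n) as Hterm. simpl in Hterm.
  assert (Hd : circle_dist (w n) (w' n) < delta).
  { apply Rmult_lt_reg_r with ((/2)^n); [apply half_pow_pos | simpl in Hw'; lra]. }
  unfold delta in Hd. pose proof (cval_range (w n)); pose proof (cval_range (w' n)).
  revert Hd Hw. unfold circle_dist, arc_dist, Rmin, Rabs.
  repeat (destruct Rle_dec || destruct Rcase_abs); intros; lra.
Qed.

Lemma mopen_near_half_turns N rho : rho <= 1/4 -> mopen (seqspace circle) (near_half_turns N rho).
Proof.
  intros Hrho. induction N as [|N IH].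
  - apply (mopen_ext (seqspace circle) (fun _ => True)); [|apply mopen_full].
    intros w. split; [intros _ n Hn; lia | auto].
  - apply (mopen_ext (seqspace circle) (fun w : nat -> circle => near_half_turns N rho w /\ Rabs (cval (w N) - 1/2) < rho)).
    + intros w. split.
      * intros [HN HwN] n Hn. destruct (Nat.eq_dec n N) as [-> | Hne]; [exact HwN | apply HN; lia].
      * intros H. split; [intros n Hn; apply H|apply H]; lia.
    + apply mopen_inter; [exact IH | apply mopen_near_half_coord, Hrho].
Qed.

Definition segment (a b : nat -> circle) (l : R) : nat -> circle :=
  fun n => to_circle (cval (a n) + l * (cval (b n) - cval (a n))).

Lemma cval_segment a b l n :
  0 <= l <= 1 -> cval (segment a b l n) = cval (a n) + l * (cval (b n) - cval (a n)).
Proof.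
  intros Hl. apply cval_to_circle. pose proof (cval_range (a n)); pose proof (cval_range (b n)).
  assert (0 <= l * cval (b n)) by (apply Rmult_le_pos; lra).
  assert (l * cval (b n) <= l * 1) by (apply Rmult_le_compat_l; lra).
  assert (0 <= (1 - l) * cval (a n)) by (apply Rmult_le_pos; lra).
  assert ((1 - l) * cval (a n) <= (1 - l) * 1) by (apply Rmult_le_compat_l; lra).
  destruct (Req_dec l 0) as [-> | Hl0]; [lra|].
  assert (l * cval (b n) < l * 1) by (apply Rmult_lt_compat_l; lra). lra.
Qed.

Lemma segment_0 a b : segment a b 0 = a.
Proof.
  extensionality n. apply circle_eq. rewrite cval_segment by lra. ring.
Qed.

Lemma segment_1 a b : segment a b 1 = b.
Proof.
  extensionality n. apply circle_eq. rewrite cval_segment by lra. ring.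
Qed.

Lemma segment_dist a b l m : 0 <= l <= 1 -> 0 <= m <= 1 ->
  seq_dist circle (segment a b l) (segment a b m) <= Rabs (l - m).
Proof.
  intros Hl Hm. apply seq_dist_le. intros n. simpl. unfold circle_dist.
  rewrite !cval_segment by assumption.
  pose proof (cval_range (a n)); pose proof (cval_range (b n)).
  pose proof (half_pow_pos n); pose proof (half_pow_le1 n).
  assert (Hd : arc_dist (cval (a n) + l * (cval (b n) - cval (a n)))
                        (cval (a n) + m * (cval (b n) - cval (a n))) <= Rabs (l - m)).
  { eapply Rle_trans; [apply arc_dist_le_abs|].
    replace (_ - _) with ((l - m) * (cval (b n) - cval (a n))) by ring.
    rewrite Rabs_mult. pose proof (Rabs_pos (l - m)).
    assert (Rabs (cval (b n) - cval (a n)) <= 1) by (unfold Rabs; destruct Rcase_abs; lra).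
    nra. }
  pose proof (circle_dist_ge0 (segment a b l n) (segment a b m n)) as Hge0.
  unfold circle_dist in Hge0. rewrite !cval_segment in Hge0 by assumption. nra.
Qed.

Lemma near_half_turns_segment N rho a b l : 0 <= l <= 1 ->
  near_half_turns N rho a -> near_half_turns N rho b -> near_half_turns N rho (segment a b l).
Proof.
  intros Hl Ha Hb n Hn. rewrite cval_segment by exact Hl.
  specialize (Ha n Hn); specialize (Hb n Hn).
  replace (_ - 1/2) with ((1 - l) * (cval (a n) - 1/2) + l * (cval (b n) - 1/2)) by ring.
  eapply Rle_lt_trans; [apply Rabs_triang|].
  rewrite !Rabs_mult, (Rabs_pos_eq l), (Rabs_pos_eq (1 - l)) by lra.
  destruct (Req_dec l 0) as [-> | Hl0]; [lra|].
  assert (l * Rabs (cval (b n) - 1/2) < l * rho) by (apply Rmult_lt_compat_l; lra).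
  assert ((1 - l) * Rabs (cval (a n) - 1/2) <= (1 - l) * rho) by (apply Rmult_le_compat_l; lra).
  lra.
Qed.

Lemma near_half_turns_connected N rho :
  connected (metric_top (seqspace circle)) (near_half_turns N rho).
Proof.
  apply connected_of_lipschitz_paths. intros a b Ha Hb.
  exists (segment a b). split; [apply segment_0|]. split; [apply segment_1|].
  split; [intros l Hl; apply near_half_turns_segment; assumption|].
  apply segment_dist.
Qed.

Lemma near_half_turns_dist N rho w : 0 <= rho ->
  near_half_turns N rho w -> seq_dist circle half_turns w <= rho + (/2)^N.
Proof.
  intros Hrho Hw. apply seq_dist_le. intros n. simpl.
  pose proof (weighted_term_bounds circle half_turns w n) as Hb. simpl in Hb.
  pose proof (half_pow_pos N); pose proof (half_pow_le1 n).
  destruct (Nat.lt_ge_cases n N) as [HnN | HnN].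
  - specialize (Hw n HnN). unfold half_turns, circle_dist in *.
    rewrite cval_to_circle in * by lra.
    pose proof (arc_dist_le_abs (1/2) (cval (w n))). rewrite Rabs_minus_sym in H1.
    pose proof (half_pow_pos n). nra.
  - pose proof (half_pow_le N n HnN). lra.
Qed.

Lemma seqspace_circle_locally_connected : locally_connected (metric_top (seqspace circle)).
Proof.
  apply (locally_connected_of_center (seqspace circle) half_turns). intros e He.
  destruct (half_pow_lt (e/2)) as [N HN]; [lra|].
  pose proof (Rmin_l (1/4) (e/4)); pose proof (Rmin_r (1/4) (e/4)).
  set (rho := Rmin (1/4) (e/4)) in *.
  assert (Hrho : 0 < rho) by (apply Rmin_glb_lt; lra).
  exists (near_half_turns N rho). split; [apply mopen_near_half_turns; lra|].
  split; [apply near_half_turns_connected|]. split.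
  - intros n _. unfold half_turns. rewrite cval_to_circle by lra.
    rewrite Rminus_diag, Rabs_R0. exact Hrho.
  - intros w Hw. pose proof (near_half_turns_dist N rho w ltac:(lra) Hw). simpl. lra.
Qed.

Theorem corollary4p5 :
  (exists G : TopAbGroup,
      zero_dimensional G /\ locally_compact G /\ metrizable G /\
      (forall x : G, add x x = zero) /\ ~ g_reversible G) /\
  (exists G : TopAbGroup,
      locally_connected G /\ locally_compact G /\ metrizable G /\
      ~ g_reversible G).
Proof.
  split.
  - exists (metric_top (shift_group Z2)). repeat split.
    + apply shift_group_Z2_zero_dimensional.
    + apply discrete_prod_locally_compact, seqspace_Z2_compact.
    + apply metric_top_metrizable.
    + apply shift_group_Z2_add_self.
    + apply shift_group_not_g_reversible. exists true. discriminate.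
  - exists (metric_top (shift_group circle)). repeat split.
    + apply discrete_prod_locally_connected, seqspace_circle_locally_connected.
    + apply discrete_prod_locally_compact, seqspace_circle_compact.
    + apply metric_top_metrizable.
    + apply shift_group_not_g_reversible. exists (to_circle (1/2)).
      intros E. apply (f_equal cval) in E.
      change (cval (to_circle (1/2)) = cval circle_zero) in E.
      rewrite cval_to_circle, cval_zero in E; lra.
Qed.
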